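(* Consider the Cucker–Smale model with bonding force $$\dot{\mathbf{x}}_i=\mathbf{v}_i,\qquad \dot{\mathbf{v}}_i=\frac{\kappa_0}{N}\sum_{j=1}^N\psi(\|\mathbf{x}_j-\mathbf{x}_i\|)(\mathbf{v}_j-\mathbf{v}_i)+\frac{\kappa_1}{N}\sum_{j\ne i}\Big\langle\mathbf{v}_j-\mathbf{v}_i,\frac{\mathbf{x}_j-\mathbf{x}_i}{\|\mathbf{x}_j-\mathbf{x}_i\|}\Big\rangle\frac{\mathbf{x}_j-\mathbf{x}_i}{\|\mathbf{x}_j-\mathbf{x}_i\|}+\frac{\kappa_2}{N}\sum_{j\ne i}\big(\|\mathbf{x}_j-\mathbf{x}_i\|-d^\infty_{ij}\big)\frac{\mathbf{x}_j-\mathbf{x}_i}{\|\mathbf{x}_j-\mathbf{x}_i\|}.$$ Suppose the initial data and parameters satisfy $$\min_{i\ne j}\|\mathbf{x}_i^0-\mathbf{x}_j^0\|>0,\quad \min_{i\ne j}d^\infty_{ij}>\sqrt{\frac{2NE(0)}{\kappa_2}},\quad (X^0,V^0)\in S,\quad \kappa_0>0,\ \kappa_1>0,\ \kappa_2>0,$$ and for $\tau\in(0,\infty]$ let $\{(\mathbf{x}_i,\mathbf{v}_i)\}$ be a smooth solution on $[0,\tau)$. Then for all $i\ne j$ and all $t\in[0,\tau)$, $$0<L\le\|\mathbf{x}_i(t)-\mathbf{x}_j(t)\|\le U.$$ In particular no finite-time collisions occur.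
   Context: $N\ge2$, $d\ge1$, Euclidean norm and inner product on $\mathbb{R}^d$; $[d^\infty_{ij}]$ real $N\times N$ matrix with $d^\infty_{ii}=0$, $d^\infty_{ij}=d^\infty_{ji}$; $(X^0,V^0)=(\mathbf{x}_i(0),\mathbf{v}_i(0))_i$. Energy: $E:=\frac12\sum_i\|\mathbf{v}_i\|^2+\frac{\kappa_2}{4N}\sum_{i,j}(\|\mathbf{x}_j-\mathbf{x}_i\|-d^\infty_{ij})^2$. $U:=\max_{i\ne j}d^\infty_{ij}+\sqrt{2NE(0)/\kappa_2}$, $L:=\min_{i\ne j}d^\infty_{ij}-\sqrt{2NE(0)/\kappa_2}$, $S:=\{(X,V)\in\mathbb{R}^{2dN}:\max_{i\ne j}\|\mathbf{x}_i-\mathbf{x}_j\|\le U\}$. The weight $\psi:[0,\infty)\to[0,\infty)$ is locally Lipschitz with $0\le\psi(r)\le\psi_M$ for all $r\ge0$ and $\psi_m:=\min_{r\in[0,U]}\psi(r)>0$. A smooth solution is a $C^1$ solution with $\mathbf{x}_i(t)\ne\mathbf{x}_j(t)$ for $i\ne j$. *)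

From HB Require Import structures.
From mathcomp Require Import all_boot all_order all_algebra.
From mathcomp Require Import all_classical all_reals all_analysis.
Set Implicit Arguments. Unset Strict Implicit. Unset Printing Implicit Defensive.
Import Order.TTheory GRing.Theory Num.Theory.
Import numFieldNormedType.Exports.
Local Open Scope classical_set_scope.
Local Open Scope ring_scope.

Section CS.
Variables (R : realType) (N d : nat).

Definition edot (u w : 'rV[R]_d) : R := \sum_(k < d) u 0 k * w 0 k.
Definition enorm (u : 'rV[R]_d) : R := Num.sqrt (\sum_(k < d) u 0 k ^+ 2).

Definition energy (kappa2 : R) (D : 'I_N -> 'I_N -> R)
  (X V : 'I_N -> 'rV[R]_d) : R :=
  2^-1 * \sum_(i < N) enorm (V i) ^+ 2
  + kappa2 / (4 * N%:R) *
    \sum_(i < N) \sum_(j < N) (enorm (X j - X i) - D i j) ^+ 2.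

(* max / min of d^oo_{ij} over i <> j (N >= 2 makes these nonempty);
   the seeds -/+ sum |D i j| are below/above every entry, so they do not
   affect the value. *)
Definition Dabs (D : 'I_N -> 'I_N -> R) : R :=
  \sum_(i < N) \sum_(j < N) `|D i j|.
Definition Dmax (D : 'I_N -> 'I_N -> R) : R :=
  \big[Num.max/ - Dabs D]_(i < N) \big[Num.max/ - Dabs D]_(j < N | i != j) D i j.
Definition Dmin (D : 'I_N -> 'I_N -> R) : R :=
  \big[Num.min/ Dabs D]_(i < N) \big[Num.min/ Dabs D]_(j < N | i != j) D i j.

Definition Ubound (kappa2 : R) (D : 'I_N -> 'I_N -> R) (X0 V0 : 'I_N -> 'rV[R]_d) : R :=
  Dmax D + Num.sqrt (2 * N%:R * energy kappa2 D X0 V0 / kappa2).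
Definition Lbound (kappa2 : R) (D : 'I_N -> 'I_N -> R) (X0 V0 : 'I_N -> 'rV[R]_d) : R :=
  Dmin D - Num.sqrt (2 * N%:R * energy kappa2 D X0 V0 / kappa2).

Definition cs_rhs (psi : R -> R) (kappa0 kappa1 kappa2 : R)
  (D : 'I_N -> 'I_N -> R) (X V : 'I_N -> 'rV[R]_d) (i : 'I_N) : 'rV[R]_d :=
  (kappa0 / N%:R) *: \sum_(j < N) psi (enorm (X j - X i)) *: (V j - V i)
  + (kappa1 / N%:R) *: \sum_(j < N | j != i)
      (edot (V j - V i) ((enorm (X j - X i))^-1 *: (X j - X i)))
        *: ((enorm (X j - X i))^-1 *: (X j - X i))
  + (kappa2 / N%:R) *: \sum_(j < N | j != i)
      (enorm (X j - X i) - D i j) *: ((enorm (X j - X i))^-1 *: (X j - X i)).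

Definition loc_lipschitz0 (psi : R -> R) : Prop :=
  forall r0 : R, 0 <= r0 -> exists delta : R, exists K : R, 0 < delta /\
    forall r s : R, 0 <= r -> 0 <= s -> `|r - r0| < delta -> `|s - r0| < delta ->
      `|psi r - psi s| <= K * `|r - s|.

Definition smooth_solution (psi : R -> R) (kappa0 kappa1 kappa2 : R)
  (D : 'I_N -> 'I_N -> R) (tau : \bar R) (X0 V0 : 'I_N -> 'rV[R]_d)
  (x v : R -> 'I_N -> 'rV[R]_d) : Prop :=
  let I := [set t : R | 0 <= t /\ (t%:E < tau)%E] in
  (forall i, x 0 i = X0 i /\ v 0 i = V0 i) /\
  (forall i, {within I, continuous (fun t => x t i)}) /\
  (forall i, {within I, continuous (fun t => v t i)}) /\
  (forall t, 0 < t -> (t%:E < tau)%E -> forall i,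
     is_derive t (1 : R) (fun s => x s i) (v t i) /\
     is_derive t (1 : R) (fun s => v s i) (cs_rhs psi kappa0 kappa1 kappa2 D (x t) (v t) i)) /\
  (forall t, I t -> forall i j, i != j -> x t i != x t j).

End CS.

(* The energy E is nonincreasing along a collision-free solution: symmetrising
   the double sums under i <-> j turns dE/dt into
     - 1/(2N) sum_(i,j) (kappa0 psi(r_ij) |v_j - v_i|^2 + kappa1 <v_j - v_i, e_ij>^2) <= 0,
   the bonding force cancelling exactly the derivative of the potential part of E.
   That potential part contains both (r_ij - d_ij)^2 and (r_ji - d_ji)^2, so
   kappa2/(2N) (r_ij - d_ij)^2 <= E(t) <= E(0), i.e. |r_ij - d_ij| <= sqrt(2N E(0)/kappa2),
   which puts r_ij between L and U; L > 0 is the hypothesis on the d_ij. *)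

From HB Require Import structures.
From mathcomp Require Import all_boot all_order all_algebra.
From mathcomp Require Import all_classical all_reals all_analysis.
From mathcomp Require Import ring lra.
Set Implicit Arguments. Unset Strict Implicit. Unset Printing Implicit Defensive.
Import Order.TTheory GRing.Theory Num.Theory.
Import numFieldNormedType.Exports.
Local Open Scope classical_set_scope.
Local Open Scope ring_scope.

Lemma ler_sum_term (R : numDomainType) (I : finType) (P : pred I) (F : I -> R) j :
  (forall i, P i -> 0 <= F i) -> P j -> F j <= \sum_(i | P i) F i.
Proof. by move=> F_ge0 Pj; rewrite (bigD1 j) //= lerDl sumr_ge0 // => i /andP[/F_ge0]. Qed.

Section Euclidean.
Variables (R : realType) (d : nat).
Implicit Types u w : 'rV[R]_d.

Lemma edotC u w : edot u w = edot w u.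
Proof. by apply: eq_bigr => k _; rewrite mulrC. Qed.

Lemma edot0r u : edot u 0 = 0.
Proof. by rewrite /edot big1 // => k _; rewrite mxE mulr0. Qed.

Lemma edotDr u w1 w2 : edot u (w1 + w2) = edot u w1 + edot u w2.
Proof. by rewrite /edot -big_split; apply: eq_bigr => k _; rewrite mxE mulrDr. Qed.

Lemma edotZr u a w : edot u (a *: w) = a * edot u w.
Proof. by rewrite /edot mulr_sumr; apply: eq_bigr => k _; rewrite mxE mulrCA. Qed.

Lemma edotNr u w : edot u (- w) = - edot u w.
Proof. by rewrite -scaleN1r edotZr mulN1r. Qed.

Lemma edotNl u w : edot (- u) w = - edot u w.
Proof. by rewrite edotC edotNr edotC. Qed.

Lemma edotBl u1 u2 w : edot (u1 - u2) w = edot u1 w - edot u2 w.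
Proof. by rewrite edotC edotDr edotNr !(edotC w). Qed.

Lemma edot_sumr (I : Type) (r : seq I) (P : pred I) u (F : I -> 'rV[R]_d) :
  edot u (\sum_(j <- r | P j) F j) = \sum_(j <- r | P j) edot u (F j).
Proof. exact: (big_morph _ (edotDr u) (edot0r u)). Qed.

Lemma edot_ge0 u : 0 <= edot u u.
Proof. by apply: sumr_ge0 => k _; rewrite -expr2 sqr_ge0. Qed.

Lemma edot_gt0 u : u != 0 -> 0 < edot u u.
Proof.
move=> u_neq0; rewrite lt_def edot_ge0 andbT; apply: contra u_neq0 => /eqP u2_eq0.
have sq_ge0 k : 0 <= u 0 k * u 0 k by rewrite -expr2 sqr_ge0.
apply/eqP/rowP => k; rewrite mxE; apply/eqP; rewrite -[_ == 0]orbb -mulf_eq0.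
by rewrite (psumr_eq0P (fun k _ => sq_ge0 k) u2_eq0).
Qed.

Lemma enormE u : enorm u = Num.sqrt (edot u u).
Proof. by rewrite /enorm /edot; under eq_bigr do rewrite expr2. Qed.

Lemma enorm_sqr u : enorm u ^+ 2 = edot u u.
Proof. by rewrite enormE sqr_sqrtr // edot_ge0. Qed.

Lemma enorm_ge0 u : 0 <= enorm u.
Proof. exact: sqrtr_ge0. Qed.

Lemma enormN u : enorm (- u) = enorm u.
Proof. by rewrite !enormE edotNl edotNr opprK. Qed.

Lemma enormB u w : enorm (u - w) = enorm (w - u).
Proof. by rewrite -enormN opprB. Qed.

Lemma enorm_continuous : continuous (@enorm R d).
Proof.
have sumsq_cont : continuous (fun u : 'rV[R]_d => \sum_(k < d) u 0 k ^+ 2).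
  apply: (continuous_big add_continuous) => k _ u.
  exact: continuous_comp (@coord_continuous R 1 d 0 k u) (@exprn_continuous R 2 _).
by move=> u; apply: continuous_comp (sumsq_cont u) (@sqrt_continuous R _).
Qed.

End Euclidean.

Section Calculus.
Variables (R : realType) (d : nat).

Lemma is_derive_coord (f : R -> 'rV[R]_d) (t : R) df k :
  is_derive t 1 f df -> is_derive t 1 (fun s => f s 0 k) (df 0 k).
Proof.
move=> [f_der <-]; have fk_der := (derivable_mxP f t 1).1 f_der 0 k.
by apply: is_derive_eq; [exact: derivableP | rewrite derive_mx // mxE].
Qed.

Lemma is_derive_sum_fun n (h : 'I_n -> R -> R) (t : R) (dh : 'I_n -> R) :
  (forall i, is_derive t 1 (h i) (dh i)) ->
  is_derive t 1 (fun s => \sum_(i < n) h i s) (\sum_(i < n) dh i).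
Proof. by move=> h_der; rewrite -fct_sumE; exact: is_derive_sum. Qed.

Lemma is_derive_edot (f g : R -> 'rV[R]_d) (t : R) df dg :
  is_derive t 1 f df -> is_derive t 1 g dg ->
  is_derive t 1 (fun s => edot (f s) (g s)) (edot df (g t) + edot (f t) dg).
Proof.
move=> f_der g_der; rewrite /edot -big_split /=.
apply: is_derive_sum_fun => k.
apply: is_derive_eq (is_deriveM (is_derive_coord k f_der) (is_derive_coord k g_der)) _.
by rewrite addrC; congr (_ + _); exact: mulrC.
Qed.

Lemma is_derive_enorm (f : R -> 'rV[R]_d) (t : R) df : f t != 0 -> is_derive t 1 f df ->
  is_derive t 1 (fun s => enorm (f s)) (edot df ((enorm (f t))^-1 *: f t)).
Proof.
move=> ft_neq0 f_der; have ff_gt0 := edot_gt0 ft_neq0.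
have := is_derive1_comp (is_derive1_sqrt ff_gt0) (is_derive_edot f_der f_der).
rewrite (_ : _ \o _ = fun s => enorm (f s)); last by apply: funext => s; rewrite /= enormE.
move/is_derive_eq; apply.
have nft_neq0 : enorm (f t) != 0 by rewrite enormE gt_eqF // sqrtr_gt0.
by rewrite edotZr -enormE (edotC (f t)); field.
Qed.

End Calculus.

Section Energy.
Variables (R : realType) (N d : nat).
Implicit Types (D : 'I_N -> 'I_N -> R) (X V A : 'I_N -> 'rV[R]_d).

Local Notation dir X i j := ((enorm (X j - X i))^-1 *: (X j - X i)).

Definition energy_rate k2 D X V A : R :=
  \sum_(i < N) edot (V i) (A i) + k2 / (2 * N%:R) *
    \sum_(i < N) \sum_(j < N) (enorm (X j - X i) - D i j) * edot (V j - V i) (dir X i j).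

Lemma is_derive_energy k2 D (x v : R -> 'I_N -> 'rV[R]_d) A (t : R) :
  (forall i, is_derive t 1 (fun s => x s i) (v t i)) ->
  (forall i, is_derive t 1 (fun s => v s i) (A i)) ->
  (forall i j, i != j -> x t i != x t j) ->
  is_derive t 1 (fun s => energy k2 D (x s) (v s)) (energy_rate k2 D (x t) (v t) A).
Proof.
move=> x_der v_der no_coll.
have dist_der i j : is_derive t 1 (fun s => enorm (x s j - x s i))
                                  (edot (v t j - v t i) (dir (x t) i j)).
  have [<-|ij] := eqVneq i j.
    rewrite !subrr scaler0 edot0r; under eq_fun do rewrite subrr.
    exact: is_derive_cst.
  apply: is_derive_enorm (is_deriveB (x_der j) (x_der i)).
  by rewrite subr_eq0 eq_sym no_coll.
have kinetic_der : is_derive t 1 (fun s => \sum_(i < N) edot (v s i) (v s i))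
                               (2 * \sum_(i < N) edot (v t i) (A i)).
  rewrite mulr_sumr; apply: is_derive_sum_fun => i.
  apply: is_derive_eq (is_derive_edot (v_der i) (v_der i)) _.
  by rewrite mulr_natl mulr2n edotC.
have potential_der :
    is_derive t 1 (fun s => \sum_(i < N) \sum_(j < N) (enorm (x s j - x s i) - D i j) ^+ 2)
      (2 * \sum_(i < N) \sum_(j < N)
             (enorm (x t j - x t i) - D i j) * edot (v t j - v t i) (dir (x t) i j)).
  rewrite mulr_sumr; apply: is_derive_sum_fun => i.
  rewrite mulr_sumr; apply: is_derive_sum_fun => j.
  apply: is_derive_eq (is_deriveX 2 (is_deriveB (dist_der i j) (is_derive_cst (D i j) t 1))) _.
  by rewrite subr0 expr1 mulrA.
have := is_deriveD (is_deriveZ 2^-1 kinetic_der) (is_deriveZ (k2 / (4 * N%:R)) potential_der).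
rewrite (_ : _ + _ = fun s => energy k2 D (x s) (v s)); last first.
  apply: funext => s; rewrite /energy /=; congr (_ * _ + _ * _).
  by apply: eq_bigr => i _; rewrite enorm_sqr.
move/is_derive_eq; apply; rewrite /energy_rate.
set S := \sum_(i < N) edot _ _; set T := \sum_(i < N) \sum_(j < N) _.
rewrite /GRing.scale /= mulrA mulVf ?pnatr_eq0 // mul1r mulrA.
congr (_ + _ * _); rewrite (_ : 4 * N%:R = 2 * (2 * N%:R)); last by ring.
by rewrite invfM mulrAC -mulrA mulVKf ?pnatr_eq0.
Qed.

Lemma sum_edot_antisym (w : 'I_N -> 'I_N -> R) (u : 'I_N -> 'I_N -> 'rV[R]_d) V :
  (forall i j, w j i = w i j) -> (forall i j, u j i = - u i j) ->
  \sum_(i < N) \sum_(j < N) w i j * edot (V i) (u i j) =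
  - 2^-1 * \sum_(i < N) \sum_(j < N) w i j * edot (V j - V i) (u i j).
Proof.
move=> w_sym u_anti; set S := LHS.
have swap : S = - \sum_(i < N) \sum_(j < N) w i j * edot (V j) (u i j).
  rewrite /S exchange_big -sumrN; apply: eq_bigr => i _; rewrite -sumrN.
  by apply: eq_bigr => j _; rewrite w_sym u_anti edotNr mulrN.
have -> : \sum_(i < N) \sum_(j < N) w i j * edot (V j - V i) (u i j) =
          \sum_(i < N) \sum_(j < N) w i j * edot (V j) (u i j) - S.
  rewrite /S -sumrB; apply: eq_bigr => i _; rewrite -sumrB.
  by apply: eq_bigr => j _; rewrite edotBl mulrBr.
by rewrite swap; field.
Qed.

Lemma energy_rate_cs psi k0 k1 k2 D X V :
  (0 < N)%N -> (forall i j, D i j = D j i) ->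
  energy_rate k2 D X V (cs_rhs psi k0 k1 k2 D X V) =
  - (2 * N%:R)^-1 *
    (k0 * \sum_(i < N) \sum_(j < N) psi (enorm (X j - X i)) * edot (V j - V i) (V j - V i)
     + k1 * \sum_(i < N) \sum_(j < N) edot (V j - V i) (dir X i j) ^+ 2).
Proof.
move=> N_gt0 D_sym.
have dir_anti i j : dir X j i = - dir X i j by rewrite enormB -scalerN opprB.
have power_i i : edot (V i) (cs_rhs psi k0 k1 k2 D X V i) =
    k0 / N%:R * \sum_(j < N) psi (enorm (X j - X i)) * edot (V i) (V j - V i)
  + k1 / N%:R * \sum_(j < N) edot (V j - V i) (dir X i j) * edot (V i) (dir X i j)
  + k2 / N%:R * \sum_(j < N) (enorm (X j - X i) - D i j) * edot (V i) (dir X i j).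
  have offdiag (c : 'I_N -> R) :
      \sum_(j < N | j != i) edot (V i) (c j *: dir X i j) =
      \sum_(j < N) c j * edot (V i) (dir X i j).
    rewrite big_mkcond; apply: eq_bigr => j _; rewrite edotZr.
    have [->|//] := eqVneq j i.
    by rewrite !subrr !scaler0 edot0r mulr0.
  rewrite /cs_rhs !edotDr !edotZr !edot_sumr !offdiag; congr (_ * _ + _ + _).
  by apply: eq_bigr => j _; rewrite edotZr.
have psi_sym i j : psi (enorm (X i - X j)) = psi (enorm (X j - X i)) by rewrite enormB.
have V_anti i j : V i - V j = - (V j - V i) by rewrite opprB.
have proj_sym i j : edot (V i - V j) (dir X j i) = edot (V j - V i) (dir X i j).
  by rewrite V_anti dir_anti edotNl edotNr opprK.
have dev_sym i j : enorm (X i - X j) - D j i = enorm (X j - X i) - D i j.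
  by rewrite enormB D_sym.
rewrite /energy_rate; under eq_bigr do rewrite power_i.
rewrite !big_split /= -!mulr_sumr (sum_edot_antisym V psi_sym V_anti).
rewrite (sum_edot_antisym V proj_sym dir_anti) (sum_edot_antisym V dev_sym dir_anti).
have -> : \sum_(i < N) \sum_(j < N) edot (V j - V i) (dir X i j) ^+ 2 =
          \sum_(i < N) \sum_(j < N) edot (V j - V i) (dir X i j) * edot (V j - V i) (dir X i j).
  by apply: eq_bigr => i _; apply: eq_bigr => j _; rewrite expr2.
have N_neq0 : N%:R != 0 :> R by rewrite pnatr_eq0 -lt0n.
by field.
Qed.

Lemma energy_rate_cs_le0 psi k0 k1 k2 D X V :
  (forall r, 0 <= r -> 0 <= psi r) -> 0 <= k0 -> 0 <= k1 ->
  (0 < N)%N -> (forall i j, D i j = D j i) ->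
  energy_rate k2 D X V (cs_rhs psi k0 k1 k2 D X V) <= 0.
Proof.
move=> psi_ge0 k0_ge0 k1_ge0 N_gt0 D_sym; rewrite energy_rate_cs // mulNr oppr_le0.
rewrite mulr_ge0 ?invr_ge0 ?mulr_ge0 ?ler0n // addr_ge0 // mulr_ge0 //.
  by do 2![apply: sumr_ge0 => ? _]; rewrite mulr_ge0 ?psi_ge0 ?enorm_ge0 ?edot_ge0.
by do 2![apply: sumr_ge0 => ? _]; rewrite sqr_ge0.
Qed.

Lemma dist_dev_le_energy k2 D X V i j :
  (0 < N)%N -> 0 < k2 -> (forall i j, D i j = D j i) -> i != j ->
  `|enorm (X i - X j) - D i j| <= Num.sqrt (2 * N%:R * energy k2 D X V / k2).
Proof.
move=> N_gt0 k2_gt0 D_sym ij; set dev := enorm (X i - X j) - D i j.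
have dev_ge0 a b : 0 <= (enorm (X b - X a) - D a b) ^+ 2 by exact: sqr_ge0.
have pair_le : 2 * dev ^+ 2 <= \sum_(a < N) \sum_(b < N) (enorm (X b - X a) - D a b) ^+ 2.
  rewrite mulr_natl mulr2n (bigD1 i) //=; apply: lerD.
    by rewrite /dev enormB; exact: (ler_sum_term (fun b _ => dev_ge0 i b)).
  apply: le_trans (ler_sum_term (fun a _ => sumr_ge0 _ (fun b _ => dev_ge0 a b)) _).
    by rewrite /dev D_sym; exact: (ler_sum_term (fun a _ => dev_ge0 j a)).
  by rewrite eq_sym.
have N_neq0 : N%:R != 0 :> R by rewrite pnatr_eq0 -lt0n.
rewrite -sqrtr_sqr ler_wsqrtr // ler_pdivlMr //.
have -> : dev ^+ 2 * k2 = 2 * N%:R * (k2 / (4 * N%:R) * (2 * dev ^+ 2)) by field.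
rewrite ler_wpM2l ?mulr_ge0 ?ler0n // /energy -[leLHS]add0r lerD //.
  by rewrite mulr_ge0 ?sumr_ge0 // => a _; rewrite sqr_ge0.
by rewrite ler_wpM2l // divr_ge0 ?mulr_ge0 ?ler0n ?ltW.
Qed.

End Energy.

Section EnergyAlongSolutions.
Variables (R : realType) (N d : nat).

Lemma energy_cvg (T : Type) (F : set_system T) {FF : Filter F} k2
    (D : 'I_N -> 'I_N -> R) (xs vs : T -> 'I_N -> 'rV[R]_d) (X V : 'I_N -> 'rV[R]_d) :
  (forall i, (fun s => xs s i) @ F --> X i) -> (forall i, (fun s => vs s i) @ F --> V i) ->
  (fun s => energy k2 D (xs s) (vs s)) @ F --> energy k2 D X V.
Proof.
have sqr_cvg (f : T -> R) (a : R) : f @ F --> a -> (fun s => f s ^+ 2) @ F --> a ^+ 2.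
  by move=> f_cvg; exact: cvg_comp f_cvg (@exprn_continuous R 2 a).
have enorm_cvg (f : T -> 'rV[R]_d) (a : 'rV[R]_d) :
    f @ F --> a -> (fun s => enorm (f s)) @ F --> enorm a.
  by move=> f_cvg; exact: cvg_comp f_cvg (@enorm_continuous R d a).
move=> xs_cvg vs_cvg; apply: cvgD; apply: cvgM; try exact: cvg_cst.
  by apply: (cvg_big add_continuous) => i _; exact/sqr_cvg/enorm_cvg.
apply: (cvg_big add_continuous) => i _; apply: (cvg_big add_continuous) => j _.
apply: sqr_cvg; apply: cvgB; last exact: cvg_cst.
by apply: enorm_cvg; apply: cvgB.
Qed.

Lemma smooth_solution_energy_le psi k0 k1 k2 (D : 'I_N -> 'I_N -> R) tau
    (X0 V0 : 'I_N -> 'rV[R]_d) x v t :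
  (forall r, 0 <= r -> 0 <= psi r) -> 0 <= k0 -> 0 <= k1 ->
  (0 < N)%N -> (forall i j, D i j = D j i) ->
  smooth_solution psi k0 k1 k2 D tau X0 V0 x v -> 0 <= t -> (t%:E < tau)%E ->
  energy k2 D (x t) (v t) <= energy k2 D X0 V0.
Proof.
move=> psi_ge0 k0_ge0 k1_ge0 N_gt0 D_sym [init [x_cont [v_cont [eqn no_coll]]]] t_ge0 t_tau.
have -> : energy k2 D X0 V0 = energy k2 D (x 0) (v 0).
  by congr energy; apply: funext => i; case: (init i).
have before_tau s : s <= t -> (s%:E < tau)%E.
  by move=> s_le_t; apply: le_lt_trans t_tau; rewrite lee_fin.
have E_der s : s \in `]0, t[ -> is_derive s 1 (fun s => energy k2 D (x s) (v s))
    (energy_rate k2 D (x s) (v s) (cs_rhs psi k0 k1 k2 D (x s) (v s))).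
  rewrite in_itv /= => /andP[s_gt0 s_lt_t]; have s_tau := before_tau s (ltW s_lt_t).
  apply: is_derive_energy => [i|i|]; first exact: (eqn s s_gt0 s_tau i).1.
    exact: (eqn s s_gt0 s_tau i).2.
  exact: no_coll (conj (ltW s_gt0) s_tau).
apply: (@ler0_derive1_le_cc R (fun s => energy k2 D (x s) (v s)) 0 t);
  rewrite ?in_itv /= ?lexx ?t_ge0 //.
- by move=> s /E_der [].
- by move=> s /E_der E_der_s; rewrite derive1E derive_val energy_rate_cs_le0.
apply: (@continuous_subspaceW _ _ _ [set s | 0 <= s /\ (s%:E < tau)%E]).
  by move=> s; rewrite /= in_itv /= => /andP[s_ge0 s_le_t]; split => //; exact: before_tau.
by move=> s; apply: energy_cvg => i; [exact: x_cont | exact: v_cont].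
Qed.

End EnergyAlongSolutions.

Section Extremes.
Variables (R : realType) (N : nat) (D : 'I_N -> 'I_N -> R).

Lemma Dmax_ge i j : i != j -> D i j <= Dmax D.
Proof. by move=> ij; apply: le_trans (le_bigmax _ _ i); exact: le_bigmax_cond. Qed.

Lemma Dmin_le i j : i != j -> Dmin D <= D i j.
Proof. by move=> ij; apply: le_trans (bigmin_le _ i _) _; exact: bigmin_le_cond. Qed.

Lemma Dmin_gt c (i0 j0 : 'I_N) : i0 != j0 -> (forall i j, i != j -> c < D i j) -> c < Dmin D.
Proof.
move=> i0j0 D_gt; have c_lt_Dabs : c < Dabs D.
  apply: lt_le_trans (D_gt _ _ i0j0) (le_trans (ler_norm _) _).
  apply: le_trans (ler_sum_term (fun j _ => normr_ge0 (D i0 j)) (isT : predT j0)) _.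
  exact: (ler_sum_term (fun i _ => sumr_ge0 _ (fun j _ => normr_ge0 (D i j)))).
by apply: lt_bigmin => // i _; apply: lt_bigmin => // j; exact: D_gt.
Qed.

End Extremes.

Theorem theorem4p1 (R : realType) (N d : nat) (hN : (2 <= N)%N) (hd : (1 <= d)%N)
  (D : 'I_N -> 'I_N -> R)
  (hD0 : forall i, D i i = 0) (hDsym : forall i j, D i j = D j i)
  (psi : R -> R) (psiM : R)
  (hpsi_lip : loc_lipschitz0 psi)
  (hpsi_bd : forall r, 0 <= r -> 0 <= psi r <= psiM)
  (kappa0 kappa1 kappa2 : R)
  (hk0 : 0 < kappa0) (hk1 : 0 < kappa1) (hk2 : 0 < kappa2)
  (X0 V0 : 'I_N -> 'rV[R]_d)
  (hpsi_m : exists psim : R, 0 < psim /\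
     forall r, 0 <= r <= Ubound kappa2 D X0 V0 -> psim <= psi r)
  (hX0 : forall i j, i != j -> 0 < enorm (X0 i - X0 j))
  (hDmin : forall i j, i != j ->
     Num.sqrt (2 * N%:R * energy kappa2 D X0 V0 / kappa2) < D i j)
  (hS : forall i j, i != j -> enorm (X0 i - X0 j) <= Ubound kappa2 D X0 V0)
  (tau : \bar R) (htau : (0 < tau)%E)
  (x v : R -> 'I_N -> 'rV[R]_d)
  (hsol : smooth_solution psi kappa0 kappa1 kappa2 D tau X0 V0 x v) :
  forall i j, i != j -> forall t : R, 0 <= t -> (t%:E < tau)%E ->
    0 < Lbound kappa2 D X0 V0 /\
    Lbound kappa2 D X0 V0 <= enorm (x t i - x t j) <= Ubound kappa2 D X0 V0.
Proof.
move=> i j ij t t_ge0 t_tau.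
have N_gt0 : (0 < N)%N by apply: leq_trans hN.
have psi_ge0 r : 0 <= r -> 0 <= psi r by move=> /hpsi_bd /andP[].
have energy_le :=
  smooth_solution_energy_le psi_ge0 (ltW hk0) (ltW hk1) N_gt0 hDsym hsol t_ge0 t_tau.
have dev_le : `|enorm (x t i - x t j) - D i j| <=
              Num.sqrt (2 * N%:R * energy kappa2 D X0 V0 / kappa2).
  apply: le_trans (dist_dev_le_energy (x t) (v t) N_gt0 hk2 hDsym ij) _.
  apply/ler_wsqrtr/ler_wpM2r; first by rewrite invr_ge0 ltW.
  by apply: ler_wpM2l; rewrite ?mulr_ge0 ?ler0n.
have sigma_lt_Dmin := Dmin_gt ij hDmin.
have := Dmin_le D ij; have := Dmax_ge D ij.
move: dev_le; rewrite /Lbound /Ubound ler_norml => /andP[? ?] ? ?.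
split; [lra | apply/andP; split; lra].
Qed.
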